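(* Let $d\ge1$, $\varepsilon>0$, and tensors $T^{(0)}\in\mathbb C$, $T^{(j)}\in(\mathbb{C}^n)^{\otimes 2j}$ ($j\in[d]$) with $\|T^{(j)}\|_F\le1$ for all $j$. For $j\in[d]$ and $i\in[2j]$ let $M_{j,i}\in\mathbb{C}^{n\times n^{2j-1}}$ be the flattening of $T^{(j)}$ whose row index is the $i$-th tensor index, let $W_{j,i}\subseteq\mathbb{C}^n$ be the span of the left singular vectors of $M_{j,i}$ with singular value at least $\varepsilon/(d+1)^2$, and let $W$ be the span of all $W_{j,i}$ and their entrywise complex conjugates $W_{j,i}^*$ ($j\in[d]$, $i\in[2j]$). Then $\dim W\le 8(d+1)^6/\varepsilon^2$, and for every $\vec y\in\mathbb{C}^n$ with $\|\vec y\|_2\le1$, \[ |f(\vec y)-f(\Pi_W\vec y)|\le\varepsilon, \] where $\Pi_W$ is the orthogonal projection onto $W$ and $f(\vec x)=T^{(0)}+\sum_{j=1}^d\langle T^{(j)},(\vec x^* )^{\otimes j}\otimes\vec x^{\otimes j}\rangle$.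
   Context: $\vec x^*$ is the entrywise complex conjugate. For tensors of the same shape, $\langle A,B\rangle=\sum_{\text{indices}}A_{i_1\dots i_k}B_{i_1\dots i_k}$ (bilinear, no conjugation). $\|\cdot\|_F$ is the Frobenius norm (square root of the sum of squared magnitudes of entries). *)

From HB Require Import structures.
From mathcomp Require Import all_boot all_order all_algebra.
From mathcomp Require Import reals.
From mathcomp Require Import complex.
Set Implicit Arguments. Unset Strict Implicit. Unset Printing Implicit Defensive.
Import Order.TTheory GRing.Theory Num.Theory.
Local Open Scope ring_scope.

Section Defs.
Variable C : numClosedFieldType.
Variable n : nat.

Definition tensor (k : nat) := {ffun 'I_k -> 'I_n} -> C.

Definition frob k (T : tensor k) : C := sqrtC (\sum_(idx : {ffun 'I_k -> 'I_n}) `|T idx| ^+ 2).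

Definition vnorm (x : 'rV[C]_n) : C := sqrtC (\sum_(a < n) `|x 0 a| ^+ 2).

Definition rest_idx k (i : 'I_k) := {ffun {l : 'I_k | l != i} -> 'I_n}.

Definition insert_idx k (i : 'I_k) (a : 'I_n) (c : rest_idx i) : {ffun 'I_k -> 'I_n} :=
  [ffun l => oapp c a (insub l : option {l0 : 'I_k | l0 != i})].

Definition flattening k (T : tensor k) (i : 'I_k) : 'M[C]_(n, #|{: rest_idx i}|) :=
  \matrix_(a < n, c < #|{: rest_idx i}|) T (insert_idx a (enum_val c)).

(* Row-vector convention: a column vector u satisfies (M M^H) u = s u iff the row
   vector u^T satisfies u^T *m gramT M = s u^T, where gramT M = (M M^H)^T. *)
Definition gramT m (M : 'M[C]_(n, m)) : 'M[C]_n := map_mx Num.conj M *m M^T.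

(* Left singular vectors of M (as row vectors): an orthonormal eigenbasis of M M^H,
   namely the rows of the unitary spectral matrix of gramT M; the k-th one has
   singular value sqrtC (spectral_diag (gramT M) 0 k).  left_sv_space M tau is the
   span of those with singular value >= tau. *)
Definition left_sv_space m (M : 'M[C]_(n, m)) (tau : C) : 'M[C]_n :=
  (\sum_(k < n | (tau <= sqrtC (spectral_diag (gramT M) 0 k))%R)
      <<row k (spectralmx (gramT M))>>)%MS.

Definition conj_space (U : 'M[C]_n) : 'M[C]_n := map_mx Num.conj U.

Definition Wspace (T : forall j : nat, tensor (2 * j)) (d : nat) (tau : C) : 'M[C]_n :=
  (\sum_(j < d.+1 | (1 <= j)%N) \sum_(i < 2 * j)
      (left_sv_space (flattening (T j) i) tau
       + conj_space (left_sv_space (flattening (T j) i) tau)))%MS.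

(* <T, (x^* )^{(x) j} (x) x^{(x) j}>  (bilinear pairing, no conjugation). *)
Definition pairing j (T : tensor (2 * j)) (x : 'rV[C]_n) : C :=
  \sum_(idx : {ffun 'I_(2 * j) -> 'I_n})
     T idx * \prod_(l < 2 * j) (if (l < j)%N then (x 0 (idx l))^* else x 0 (idx l)).

Definition fpoly (T0 : C) (T : forall j : nat, tensor (2 * j)) (d : nat) (x : 'rV[C]_n) : C :=
  T0 + \sum_(j < d.+1 | (1 <= j)%N) pairing (T j) x.

End Defs.

(* Telescoping each pairing over its [2 j] slots writes [f y - f (P y)],
   [P] the projection onto [W], as a sum of [d (d + 1)] contractions of some
   [T^(j)] with [q = y - P y] (or [q^*]) in one slot [i] and vectors of norm at
   most one elsewhere.  Contracting slot [i] is multiplying by the flattening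
   [M_(j,i)]; since [q] and [q^*] are orthogonal to [W], which contains
   [W_(j,i)] and [W_(j,i)^*], only singular values below
   [tau = eps / (d + 1)^2] contribute, so each term is at most [tau].  For the
   dimension, [M_(j,i)] has at most [|T^(j)|_F^2 / tau^2 <= 1 / tau^2]
   singular values [>= tau], and [W] is spanned by [2 d (d + 1)] such spaces. *)

From HB Require Import structures.
From mathcomp Require Import all_boot all_order all_algebra.
From mathcomp Require Import reals complex.
From mathcomp Require Import ring.
Set Implicit Arguments. Unset Strict Implicit. Unset Printing Implicit Defensive.
Import Order.TTheory GRing.Theory Num.Theory Num.Def.
Local Open Scope ring_scope.
Local Open Scope sesquilinear_scope.

Section MultiIndex.
Variables (C : numClosedFieldType) (n k : nat) (i : 'I_k).

Lemma insert_idx_at (a : 'I_n) (r : rest_idx n i) : insert_idx a r i = a.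
Proof. by rewrite ffunE insubF ?eqxx. Qed.

Lemma insert_idx_val (a : 'I_n) (r : rest_idx n i) (l : {l : 'I_k | l != i}) :
  insert_idx a r (val l) = r l.
Proof. by rewrite ffunE valK. Qed.

Definition restrict_idx (idx : {ffun 'I_k -> 'I_n}) : rest_idx n i :=
  [ffun l => idx (val l)].

Lemma insert_restrict_idx (idx : {ffun 'I_k -> 'I_n}) :
  insert_idx (idx i) (restrict_idx idx) = idx.
Proof.
apply/ffunP => l; rewrite ffunE.
have [->|li] := eqVneq l i; first by rewrite insubF ?eqxx.
by rewrite (insubT (fun l0 => l0 != i) li) /= ffunE.
Qed.

Lemma restrict_insert_idx (a : 'I_n) (r : rest_idx n i) :
  restrict_idx (insert_idx a r) = r.
Proof. by apply/ffunP => l; rewrite ffunE insert_idx_val. Qed.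

Lemma sum_insert_idx (F : {ffun 'I_k -> 'I_n} -> C) :
  \sum_idx F idx = \sum_a \sum_(r : rest_idx n i) F (insert_idx a r).
Proof.
rewrite pair_big (reindex (fun p : 'I_n * rest_idx n i => insert_idx p.1 p.2)) //=.
exists (fun idx : {ffun _ -> _} => (idx i, restrict_idx idx)) => [[a r] _|idx _] /=.
  by rewrite insert_idx_at restrict_insert_idx.
by rewrite insert_restrict_idx.
Qed.

End MultiIndex.

Section SquaredNorms.
Variable C : numClosedFieldType.

Definition sqnorm m (x : 'rV[C]_m) : C := \sum_a `|x 0 a| ^+ 2.

Lemma sqnorm_ge0 m (x : 'rV[C]_m) : 0 <= sqnorm x.
Proof. by apply: sumr_ge0 => a _; rewrite exprn_ge0. Qed.

Lemma sqnormE m (x : 'rV[C]_m) : sqnorm x = (x *m x ^t*) 0 0.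
Proof. by rewrite mxE; apply: eq_bigr => a _; rewrite !mxE normCK. Qed.

Lemma sqnorm_conj m (x : 'rV[C]_m) : sqnorm (map_mx conjC x) = sqnorm x.
Proof. by apply: eq_bigr => a _; rewrite mxE norm_conjC. Qed.

Lemma sqnormD m (x y : 'rV[C]_m) : x *m y ^t* = 0 ->
  sqnorm (x + y) = sqnorm x + sqnorm y.
Proof.
move=> xy; have yx : y *m x ^t* = (x *m y ^t*) ^t*.
  by rewrite trmx_mul map_mxM trmxCK.
rewrite xy trmx0 map_mx0 in yx; rewrite !sqnormE.
have -> : (x + y) ^t* = x ^t* + y ^t* by apply/matrixP => a b; rewrite !mxE rmorphD.
by rewrite mulmxDr !mulmxDl xy yx addr0 add0r mxE.
Qed.

Lemma sqnorm_mul_unitary m m' (x : 'rV[C]_m) (U : 'M[C]_(m, m')) :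
  U \is unitarymx -> sqnorm (x *m U) = sqnorm x.
Proof. by move=> U_unitary; rewrite !sqnormE trmx_mul map_mxM mulmxA mulmxtVK. Qed.

Lemma ler_sqrtC_sqr (x t : C) : 0 <= x -> 0 <= t -> (t <= sqrtC x) = (t ^+ 2 <= x).
Proof. by move=> x0 t0; rewrite -{2}(sqrtCK x) ler_pXn2r // nnegrE ?sqrtC_ge0. Qed.

Lemma sqrtC_le1 (x : C) : 0 <= x -> sqrtC x <= 1 -> x <= 1.
Proof. by move=> x0 h; rewrite -ler_sqrtC ?nnegrE ?sqrtC1. Qed.

Lemma norm_sum_mul_le (I : finType) (a b : I -> C) (tau : C) : 0 < tau ->
  \sum_i `|a i| ^+ 2 <= tau ^+ 2 -> \sum_i `|b i| ^+ 2 <= 1 ->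
  `|\sum_i a i * b i| <= tau.
Proof.
move=> tau_gt0 suma sumb; apply: le_trans (ler_norm_sum _ _ _) _.
rewrite -(ler_pM2l tau_gt0) -(ler_pMn2r (isT : 0 < 2)%N) mulr_sumr -sumrMnl.
(* AM-GM: [2 |a i| (tau |b i|) <= |a i|^2 + tau^2 |b i|^2]. *)
apply: le_trans (_ : \sum_i (`|a i| ^+ 2 + (tau * `|b i|) ^+ 2) <= _).
  apply: ler_sum => j _; rewrite normrM mulrCA.
  apply: (real_leif_mean_square_scaled _ _).1; first exact: normr_real.
  by rewrite realM ?normr_real ?gtr0_real.
rewrite big_split /= mulr2n -expr2 lerD //.
under eq_bigr do rewrite exprMn.
rewrite -mulr_sumr -[X in _ <= X]mulr1.
by apply: ler_wpM2l => //; rewrite exprn_ge0 ?ltW.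
Qed.

End SquaredNorms.

Lemma mxrank_sum_le (F : fieldType) n (I : finType) (P : pred I) (A : I -> 'M[F]_n) :
  (\rank (\sum_(i | P i) A i)%MS <= \sum_(i | P i) \rank (A i))%N.
Proof. exact: mxrank_sum_leqif. Qed.

Lemma ortho_submx (C : numClosedFieldType) m n p q (x : 'M[C]_(m, n))
    (U : 'M[C]_(p, n)) (V : 'M[C]_(q, n)) :
  (V <= U)%MS -> x *m U ^t* = 0 -> x *m V ^t* = 0.
Proof. by case/submxP=> X -> xU; rewrite trmx_mul map_mxM mulmxA xU mul0mx. Qed.

Lemma sum_sqr_tensor_prod (C : numClosedFieldType) (J : finType) n (v : J -> 'rV[C]_n) :
  \sum_(r : {ffun J -> 'I_n}) `|\prod_l v l 0 (r l)| ^+ 2 = \prod_l sqnorm (v l).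
Proof.
rewrite bigA_distr_bigA /=; apply: eq_bigr => r _.
by rewrite normr_prod -prodrXl.
Qed.

Lemma prodrB_telescope (R : comPzRingType) k (a b : 'I_k -> R) :
  \prod_l a l - \prod_l b l =
  \sum_(m < k) \prod_(l < k)
     (if (l < m)%N then b l else if l == m then a l - b l else a l).
Proof.
pose P m := \prod_(l < k) (if (l < m)%N then b l else a l).
have -> : \prod_l a l - \prod_l b l = P 0%N - P k.
  by congr (_ - _); apply: eq_bigr => l _; rewrite ltn_ord.
rewrite -opprB -(telescope_sumr _ (leq0n k)) big_mkord -sumrN.
apply: eq_bigr => m _; rewrite opprB /P (bigD1 m) //= [in X in _ - X](bigD1 m) //=.
rewrite [RHS](bigD1 m) //= ltnn ltnSn eqxx mulrBl; congr (_ * _ - _ * _).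
  by apply: eq_bigr => l /negbTE lm; rewrite lm.
by apply: eq_bigr => l /negbTE lm; rewrite ltnS leq_eqVlt [_ == _ :> nat]lm lm.
Qed.

Section Contraction.
Variables (C : numClosedFieldType) (n k : nat) (T : tensor C n k).

Definition mlform (V : 'I_k -> 'rV[C]_n) : C :=
  \sum_idx T idx * \prod_l V l 0 (idx l).

Lemma sqnorm_mul_flattening (i : 'I_k) (v : 'rV[C]_n) :
  sqnorm (v *m flattening T i) =
  \sum_(r : rest_idx n i) `|\sum_a v 0 a * T (insert_idx a r)| ^+ 2.
Proof.
rewrite [RHS]big_enum_val; apply: eq_bigr => c _.
by rewrite mxE; congr (`|_| ^+ 2); apply: eq_bigr => a _; rewrite mxE.
Qed.

Lemma sum_sqr_flattening (i : 'I_k) :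
  \sum_a sqnorm (row a (flattening T i)) = \sum_idx `|T idx| ^+ 2.
Proof.
rewrite (sum_insert_idx i); apply: eq_bigr => a _.
by rewrite [RHS]big_enum_val; apply: eq_bigr => c _; rewrite !mxE.
Qed.

(* Contract the [i]-th slot against [V i] and apply Cauchy-Schwarz to the
   remaining slots, whose tensor product has norm at most one. *)
Lemma norm_mlform_le (i : 'I_k) (V : 'I_k -> 'rV[C]_n) (tau : C) : 0 < tau ->
  sqnorm (V i *m flattening T i) <= tau ^+ 2 ->
  (forall l, l != i -> sqnorm (V l) <= 1) -> `|mlform V| <= tau.
Proof.
move=> tau_gt0 Vi_le V_le1.
pose W (l : {l : 'I_k | l != i}) := V (val l).
have -> : mlform V = \sum_(r : rest_idx n i)
    (\sum_a V i 0 a * T (insert_idx a r)) * \prod_l W l 0 (r l).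
  rewrite /mlform (sum_insert_idx i) exchange_big; apply: eq_bigr => r _.
  rewrite mulr_suml; apply: eq_bigr => a _.
  rewrite (bigD1 i) //= (big_sub (fun l : 'I_k => l != i)) /= insert_idx_at.
  under eq_bigr do rewrite insert_idx_val.
  by rewrite mulrCA mulrA.
apply: norm_sum_mul_le => //; first by rewrite -sqnorm_mul_flattening.
rewrite sum_sqr_tensor_prod; apply: prodr_ile1 => l _.
by rewrite sqnorm_ge0 V_le1 // (valP l).
Qed.

End Contraction.

Section LeftSingularSpace.
Variables (C : numClosedFieldType) (n m : nat) (M : 'M[C]_(n, m)).

Local Notation G := (gramT M).
Local Notation S := (spectralmx (gramT M)).
Local Notation sv2 := (spectral_diag (gramT M)).

Lemma gramT_quadE (p : 'rV[C]_n) :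
  (p *m G *m p ^t*) 0 0 = sqnorm (p *m map_mx conjC M).
Proof.
rewrite sqnormE /gramT mulmxA; congr (fun X => X 0 0).
by rewrite -mulmxA; congr (_ *m _); rewrite trmx_mul map_mxM map_trmx map_mxCK.
Qed.

Lemma gramT_normal : G \is normalmx.
Proof.
apply/hermitian_normalmx/is_hermitianmxP; rewrite expr0 scale1r.
by rewrite /gramT trmx_mul map_mxM trmxK map_trmx map_mxCK.
Qed.

Lemma gramT_spectral : G = S ^t* *m diag_mx sv2 *m S.
Proof.
have /orthomx_spectralP {1}-> := gramT_normal.
by rewrite invmx_unitary ?spectral_unitarymx.
Qed.

Lemma gramT_quad_spectral (p : 'rV[C]_n) :
  (p *m G *m p ^t*) 0 0 = \sum_k sv2 0 k * `|(p *m S ^t*) 0 k| ^+ 2.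
Proof.
have -> : p *m G *m p ^t* = (p *m S ^t*) *m diag_mx sv2 *m (p *m S ^t*) ^t*.
  by rewrite {1}gramT_spectral trmx_mul map_mxM trmxCK !mulmxA.
rewrite mxE; apply: eq_bigr => k _.
by rewrite mul_mx_diag !mxE normCK mulrCA mulrA.
Qed.

Lemma spectral_diag_gramT_ge0 k : 0 <= sv2 0 k.
Proof.
have := gramT_quad_spectral (row k S).
rewrite gramT_quadE -[row k S *m S ^t*]row_mul (unitarymxP (spectral_unitarymx _)).
rewrite (bigD1 k) //= big1 => [|l lk]; last first.
  by rewrite !mxE eq_sym (negbTE lk) normr0 expr0n mulr0.
rewrite !mxE eqxx normr1 expr1n mulr1 addr0 => <-; exact: sqnorm_ge0.
Qed.

Lemma sum_spectral_diag_gramT : \sum_k sv2 0 k = \sum_a sqnorm (row a M).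
Proof.
rewrite -mxtrace_diag -[diag_mx sv2]mul1mx -(unitarymxP (spectral_unitarymx G)).
rewrite -mulmxA mxtrace_mulC -gramT_spectral; apply: eq_bigr => a _.
by rewrite !mxE; apply: eq_bigr => c _; rewrite !mxE normCKC.
Qed.

Lemma rank_left_sv_space_le tau : 0 < tau ->
  (\rank (left_sv_space M tau))%:R * tau ^+ 2 <= \sum_a sqnorm (row a M).
Proof.
move=> tau_gt0; pose large := [pred k | tau <= sqrtC (sv2 0 k)].
have rank_le : (\rank (left_sv_space M tau) <= #|large|)%N.
  apply: leq_trans (mxrank_sum_le _ _) _; rewrite -sum1_card.
  by apply: leq_sum => k _; rewrite genmxE rank_leq_row.
apply: le_trans (_ : #|large|%:R * tau ^+ 2 <= _).
  by apply: ler_wpM2r; [exact/exprn_ge0/ltW | rewrite ler_nat].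
rewrite -sum_spectral_diag_gramT mulr_natl -sumr_const.
rewrite [X in _ <= X](bigID large) /= -[X in X <= _]addr0; apply: lerD.
  by apply: ler_sum => k; rewrite inE => k_large;
    rewrite -ler_sqrtC_sqr ?spectral_diag_gramT_ge0 ?(ltW tau_gt0).
by apply: sumr_ge0 => k _; exact: spectral_diag_gramT_ge0.
Qed.

Lemma sqnorm_conj_mul_le tau (p : 'rV[C]_n) : 0 < tau ->
  p *m (left_sv_space M tau) ^t* = 0 -> sqnorm p <= 1 ->
  sqnorm (map_mx conjC p *m M) <= tau ^+ 2.
Proof.
move=> tau_gt0 pL p_le1.
rewrite -sqnorm_conj map_mxM map_mxCK -gramT_quadE gramT_quad_spectral.
apply: le_trans (_ : \sum_k tau ^+ 2 * `|(p *m S ^t*) 0 k| ^+ 2 <= _).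
  apply: ler_sum => k _; have [k_large|k_small] := boolP (tau <= sqrtC (sv2 0 k)).
    have : (row k S <= left_sv_space M tau)%MS by apply: (sumsmx_sup k); rewrite ?genmxE.
    move=> /ortho_submx /(_ pL) /matrixP /(_ 0 0) pk.
    have -> : (p *m S ^t*) 0 k = (p *m (row k S) ^t*) 0 0.
      by rewrite !mxE; apply: eq_bigr => a _; rewrite !mxE.
    by rewrite pk mxE normr0 expr0n /= !mulr0.
  apply: ler_wpM2r; first exact: exprn_ge0.
  move: k_small; rewrite ler_sqrtC_sqr ?spectral_diag_gramT_ge0 ?(ltW tau_gt0) //.
  by rewrite -real_ltNge ?ger0_real ?exprn_ge0 ?spectral_diag_gramT_ge0
    ?(ltW tau_gt0) // => /ltW.
rewrite -mulr_sumr -/(sqnorm _) sqnorm_mul_unitary ?trmxC_unitary ?spectral_unitarymx //.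
rewrite -[X in _ <= X]mulr1; apply: ler_wpM2l => //; exact/exprn_ge0/ltW.
Qed.

End LeftSingularSpace.

Section Pairing.
Variables (C : numClosedFieldType) (n j : nat).

Definition pairing_arg (x : 'rV[C]_n) (l : 'I_(2 * j)) : 'rV[C]_n :=
  if (l < j)%N then map_mx conjC x else x.

Lemma sqnorm_pairing_arg x l : sqnorm (pairing_arg x l) = sqnorm x.
Proof. by rewrite /pairing_arg; case: ifP; rewrite ?sqnorm_conj. Qed.

Lemma pairing_argB x y l :
  pairing_arg (x - y) l = pairing_arg x l - pairing_arg y l.
Proof. by rewrite /pairing_arg; case: ifP; rewrite ?map_mxB. Qed.

Lemma pairing_mlform (Tj : tensor C n (2 * j)) x :
  pairing Tj x = mlform Tj (pairing_arg x).
Proof.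
apply: eq_bigr => idx _; congr (_ * _); apply: eq_bigr => l _.
by rewrite /pairing_arg; case: ifP; rewrite ?mxE.
Qed.

Lemma pairingB_le (Tj : tensor C n (2 * j)) tau (y z : 'rV[C]_n) : 0 < tau ->
  sqnorm y <= 1 -> sqnorm z <= 1 -> sqnorm (y - z) <= 1 ->
  (forall i, (y - z) *m (left_sv_space (flattening Tj i) tau) ^t* = 0 /\
     (y - z) *m (conj_space (left_sv_space (flattening Tj i) tau)) ^t* = 0) ->
  `|pairing Tj y - pairing Tj z| <= (2 * j)%:R * tau.
Proof.
move=> tau_gt0 y_le1 z_le1 q_le1 q_ortho; set q := y - z.
pose V (m l : 'I_(2 * j)) := if (l < m)%N then pairing_arg z l
  else if l == m then pairing_arg q l else pairing_arg y l.
have slot_le m : sqnorm (pairing_arg q m *m flattening Tj m) <= tau ^+ 2.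
  have [qL qLc] := q_ortho m; rewrite /pairing_arg; case: ifP => _.
    exact: sqnorm_conj_mul_le.
  rewrite -[q]map_mxCK; apply: sqnorm_conj_mul_le; rewrite ?sqnorm_conj //.
  by have := congr1 (map_mx conjC) qLc; rewrite map_mxM map_mxCK -map_trmx map_mx0.
have -> : pairing Tj y - pairing Tj z = \sum_(m < 2 * j) mlform Tj (V m).
  rewrite !pairing_mlform -sumrB exchange_big /=; apply: eq_bigr => idx _.
  rewrite -mulrBr prodrB_telescope mulr_sumr; apply: eq_bigr => m _.
  congr (_ * _); apply: eq_bigr => l _; rewrite /V.
  by case: (l < m)%N; case: (l == m); rewrite ?pairing_argB ?mxE.
rewrite mulr_natl -[in X in _ <= X](card_ord (2 * j)) -sumr_const.
apply: le_trans (ler_norm_sum _ _ _) (ler_sum _ _) => m _.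
apply: (norm_mlform_le (i := m)) => //; first by rewrite /V ltnn eqxx.
move=> l lm; rewrite /V (negbTE lm); case: ifP => _;
  by rewrite sqnorm_pairing_arg.
Qed.

End Pairing.

Lemma sum_double_ord d : (\sum_(j < d.+1 | (1 <= j)%N) 2 * j)%N = (d * d.+1)%N.
Proof.
rewrite big_mkcond /=; elim: d => [|d IHd]; first by rewrite big_ord1.
by rewrite big_ord_recr /= IHd -mulnDl mulnC addn2.
Qed.

Section Wspace.
Variables (C : numClosedFieldType) (n d : nat) (T : forall j : nat, tensor C n (2 * j)).
Arguments T : clear implicits. (* [j] would otherwise be implicit. *)
Variable tau : C.
Hypothesis tau_gt0 : 0 < tau.

Local Notation L j i := (left_sv_space (flattening (T j) i) tau).
Local Notation W := (Wspace T d tau).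

Lemma left_sv_space_sub_Wspace (j : 'I_d.+1) (i : 'I_(2 * j)) : (1 <= j)%N ->
  (L j i <= W)%MS /\ (conj_space (L j i) <= W)%MS.
Proof.
by move=> j_gt0; split; apply: (sumsmx_sup j) => //; apply: (sumsmx_sup i) => //;
  rewrite ?addsmxSl ?addsmxSr.
Qed.

Lemma rank_Wspace_le : (forall j, (1 <= j <= d)%N -> frob (T j) <= 1) ->
  (\rank W)%:R * tau ^+ 2 <= (2 * (d * d.+1))%:R.
Proof.
move=> frob_le1.
pose rank_sum := (\sum_(j < d.+1 | (1 <= j)%N) \sum_(i < 2 * j) (\rank (L j i)).*2)%N.
have rank_W : (\rank W <= rank_sum)%N.
  rewrite /Wspace; apply: leq_trans (mxrank_sum_le _ _) _; apply: leq_sum => j _.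
  apply: leq_trans (mxrank_sum_le _ _) _; apply: leq_sum => i _.
  by apply: leq_trans (mxrank_adds_leqif _ _) _; rewrite mxrank_map -addnn.
apply: le_trans (_ : rank_sum%:R * tau ^+ 2 <= _).
  by apply: ler_wpM2r; [exact/exprn_ge0/ltW | rewrite ler_nat].
rewrite -sum_double_ord big_distrr !natr_sum mulr_suml; apply: ler_sum => j j_gt0.
apply: le_trans (_ : (\sum_(i < 2 * j) 2%N)%:R <= _); last first.
  by rewrite sum_nat_const card_ord mulnC.
rewrite !natr_sum mulr_suml; apply: ler_sum => i _.
rewrite -muln2 natrM mulrAC -[X in _ <= X]mul1r; apply: ler_wpM2r => //.
apply: le_trans (rank_left_sv_space_le _ tau_gt0) _.
rewrite sum_sqr_flattening; apply: sqrtC_le1.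
  by apply: sumr_ge0 => idx _; rewrite exprn_ge0.
by apply: (frob_le1 j); rewrite j_gt0 -ltnS ltn_ord.
Qed.

Lemma fpoly_proj_ortho_le (T0 : C) (y : 'rV[C]_n) : sqnorm y <= 1 ->
  `|fpoly T0 T d y - fpoly T0 T d (y *m proj_ortho W)| <= (d * d.+1)%:R * tau.
Proof.
move=> y_le1; set z := y *m proj_ortho W.
have yz_W : (y - z) *m W ^t* = 0 by apply/orthomx1P/proj_ortho_compl_sub.
have y_split : sqnorm y = sqnorm (y - z) + sqnorm z.
  by rewrite -sqnormD ?subrK // (ortho_submx (proj_ortho_sub _ _) yz_W).
have z_le1 : sqnorm z <= 1 by apply: le_trans y_le1; rewrite y_split lerDr sqnorm_ge0.
have yz_le1 : sqnorm (y - z) <= 1.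
  by apply: le_trans y_le1; rewrite y_split lerDl sqnorm_ge0.
rewrite /fpoly opprD addrACA subrr add0r -sumrB -sum_double_ord natr_sum mulr_suml.
apply: le_trans (ler_norm_sum _ _ _) (ler_sum _ _) => j j_gt0.
apply: pairingB_le => // i; have [Lsub Lcsub] := left_sv_space_sub_Wspace i j_gt0.
by split; exact: ortho_submx yz_W.
Qed.

End Wspace.

Theorem lemma6p4 (R : realType) (n d : nat) (eps : R[i]) (T0 : R[i])
    (T : forall j : nat, tensor R[i] n (2 * j)) :
  (1 <= d)%N -> 0 < eps ->
  `|T0| <= 1 -> (forall j : nat, (1 <= j <= d)%N -> frob (T j) <= 1) ->
  let W := Wspace T d (eps / (d.+1)%:R ^+ 2) in
  (\rank W)%:R <= 8 * (d.+1)%:R ^+ 6 / eps ^+ 2 /\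
  (forall y : 'rV[R[i]]_n, vnorm y <= 1 ->
     `|fpoly T0 T d y - fpoly T0 T d (y *m proj_ortho W)| <= eps).
Proof.
move=> _ eps_gt0 _ frob_le1 /=; set tau := eps / _.
have d1_gt0 : 0 < (d.+1)%:R ^+ 2 :> R[i] by rewrite exprn_gt0 ?ltr0Sn.
have tau_gt0 : 0 < tau by rewrite divr_gt0.
have eps_tau : eps = (d.+1)%:R ^+ 2 * tau by rewrite mulrC divfK ?gt_eqF.
split.
  have := rank_Wspace_le tau_gt0 frob_le1; rewrite -ler_pdivlMr ?exprn_gt0 //.
  move/le_trans; apply.
  have -> : 8 * (d.+1)%:R ^+ 6 / eps ^+ 2 = (8 * d.+1 ^ 2)%:R / tau ^+ 2.
    by rewrite eps_tau natrM natrX; field; rewrite gt_eqF //= addrC natr1 pnatr_eq0.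
  apply: ler_wpM2r; first by rewrite invr_ge0 exprn_ge0 ?ltW.
  by rewrite ler_nat leq_mul // leq_mul.
move=> y /(sqrtC_le1 (sqnorm_ge0 _)) y_le1.
apply: le_trans (fpoly_proj_ortho_le d T tau_gt0 T0 y_le1) _.
rewrite [X in _ <= X]eps_tau; apply: ler_wpM2r; first exact: ltW.
by rewrite -natrX ler_nat leq_mul.
Qed.
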